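(* For a finite set $S$, the following three classes of $S$-cubes in $\Lambda$ coincide: (i) the strongly biCartesian $S$-cubes in $\Lambda$; (ii) the images under $\Delta\to\Lambda$ of strongly biCartesian $S$-cubes in $\Delta$ all of whose morphisms are left active; (iii) the images under $\Delta\to\Lambda$ of strongly biCartesian $S$-cubes in $\Delta$ all of whose morphisms are right active.
   Context: $\Delta$: simplex category of $[n]=\{0<\dots<n\}$ and weakly monotone maps; $f:[m]\to[n]$ is left active if $f(0)=0$, right active if $f(m)=n$. $\Lambda$: Connes' cyclic category; the canonical functor $\Delta\to\Lambda$, $[n]\mapsto\langle n\rangle=(\mathbb{Z}/(n+1),+1)$, identifies $\Delta$ with the slice $\Lambda_{/\langle0\rangle}$ and is the forgetful functor. An $S$-cube in a category $\mathcal{D}$ is a functor $Q:\mathcal{P}(S)^{\mathrm{op}}\to\mathcal{D}$ ($\mathcal{P}(S)$ the subset poset); it is strongly biCartesian if every square $Q(T\cup\{s,s'\})\to Q(T\cup\{s\}),Q(T\cup\{s'\})\to Q(T)$ ($s\neq s'\notin T$) is both a pullback and a pushout in $\mathcal{D}$. *)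

From HB Require Import structures.
From mathcomp Require Import all_boot all_order all_algebra.
Set Implicit Arguments. Unset Strict Implicit. Unset Printing Implicit Defensive.
Import Order.TTheory GRing.Theory Num.Theory.

(* A (pre)category presented by raw morphisms, a validity predicate singling
   out the genuine morphisms, and a setoid equality of morphisms. *)
Record Cat := Cat_ {
  ob : Type;
  hom : ob -> ob -> Type;
  valid : forall a b, hom a b -> Prop;
  heq : forall a b, hom a b -> hom a b -> Prop;
  idm : forall a, hom a a;
  comp : forall a b c, hom b c -> hom a b -> hom a c }.

Arguments valid {_ _ _} _.
Arguments heq {_ _ _} _ _.
Arguments idm {_} _.
Arguments comp {_ _ _ _} _ _.

Section CatDefs.
Variable C : Cat.

Definition is_pullback (A B D E : ob C) (p : hom A B) (q : hom A D)
    (f : hom B E) (g : hom D E) : Prop :=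
  heq (comp f p) (comp g q) /\
  forall (X : ob C) (u : hom X B) (v : hom X D),
    valid u -> valid v -> heq (comp f u) (comp g v) ->
    exists w : hom X A, valid w /\ heq (comp p w) u /\ heq (comp q w) v /\
      forall w' : hom X A, valid w' -> heq (comp p w') u -> heq (comp q w') v ->
        heq w' w.

Definition is_pushout (A B D E : ob C) (p : hom A B) (q : hom A D)
    (f : hom B E) (g : hom D E) : Prop :=
  heq (comp f p) (comp g q) /\
  forall (X : ob C) (u : hom B X) (v : hom D X),
    valid u -> valid v -> heq (comp u p) (comp v q) ->
    exists w : hom E X, valid w /\ heq (comp w f) u /\ heq (comp w g) v /\
      forall w' : hom E X, valid w' -> heq (comp w' f) u -> heq (comp w' g) v ->
        heq w' w.

Definition is_iso (a b : ob C) (f : hom a b) : Prop :=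
  valid f /\ exists g : hom b a, valid g /\
    heq (comp g f) (idm a) /\ heq (comp f g) (idm b).

(* An S-cube: a functor P(S)^op -> C.  [cmor T U] is the image of the
   inclusion T \subset U (only meaningful when T \subset U). *)
Record cube (S : finType) := Cube {
  cob : {set S} -> ob C;
  cmor : forall T U : {set S}, hom (cob U) (cob T) }.

Definition is_cube (S : finType) (Q : cube S) : Prop :=
  (forall T U : {set S}, T \subset U -> valid (cmor Q T U)) /\
  (forall T : {set S}, heq (cmor Q T T) (idm (cob Q T))) /\
  (forall T U V : {set S}, T \subset U -> U \subset V ->
     heq (cmor Q T V) (comp (cmor Q T U) (cmor Q U V))).

Definition strongly_biCartesian (S : finType) (Q : cube S) : Prop :=
  forall (T : {set S}) (s s' : S), s != s' -> s \notin T -> s' \notin T ->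
    is_pullback (cmor Q (s |: T) (s |: (s' |: T)))
                (cmor Q (s' |: T) (s |: (s' |: T)))
                (cmor Q T (s |: T)) (cmor Q T (s' |: T)) /\
    is_pushout  (cmor Q (s |: T) (s |: (s' |: T)))
                (cmor Q (s' |: T) (s |: (s' |: T)))
                (cmor Q T (s |: T)) (cmor Q T (s' |: T)).

Definition cube_iso (S : finType) (Q Q' : cube S) : Prop :=
  exists alpha : forall T : {set S}, hom (cob Q T) (cob Q' T),
    (forall T, is_iso (alpha T)) /\
    forall T U : {set S}, T \subset U ->
      heq (comp (alpha T) (cmor Q T U)) (comp (cmor Q' T U) (alpha U)).

End CatDefs.

(* The simplex category: object n stands for [n] = {0<...<n}; a morphism
   [m] -> [n] is a weakly monotone map, represented by a function on nat
   considered on {0..m}. *)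
Definition Delta : Cat :=
  @Cat_ nat (fun _ _ => nat -> nat)
    (fun m n (f : nat -> nat) =>
       (forall i j, i <= j -> j <= m -> f i <= f j) /\
       (forall i, i <= m -> f i <= n))
    (fun m n (f g : nat -> nat) => forall i, i <= m -> f i = g i)
    (fun _ => fun i => i)
    (fun _ _ _ (g f : nat -> nat) => fun i => g (f i)).

Definition left_active (m n : nat) (f : nat -> nat) : Prop := f 0 = 0.
Definition right_active (m n : nat) (f : nat -> nat) : Prop := f m = n.

Local Open Scope ring_scope.

(* Connes' cyclic category, via its paracyclic model: object n stands for
   <n> = (Z/(n+1), +1); a morphism <m> -> <n> is a weakly monotone map
   f : Z -> Z with f (i + (m+1)) = f i + (n+1), taken modulo translation by
   multiples of (n+1). *)
Definition Lambda : Cat :=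
  @Cat_ nat (fun _ _ => int -> int)
    (fun m n (f : int -> int) =>
       (forall i j : int, i <= j -> f i <= f j) /\
       (forall i : int, f (i + (m.+1)%:Z) = f i + (n.+1)%:Z))
    (fun m n (f g : int -> int) =>
       exists k : int, forall i : int, g i = f i + k * (n.+1)%:Z)
    (fun _ => fun i => i)
    (fun _ _ _ (g f : int -> int) => fun i => g (f i)).

(* The canonical functor Delta -> Lambda, [n] |-> <n>: a monotone map
   f : [m] -> [n] is extended to Z by f (r + q(m+1)) = f r + q(n+1). *)
Definition iota (m n : nat) (f : nat -> nat) : int -> int :=
  fun i => (f (absz (i %% (m.+1)%:Z)%Z))%:Z + (i %/ (m.+1)%:Z)%Z * (n.+1)%:Z.

Definition cube_image (S : finType) (P : cube Delta S) : cube Lambda S :=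
  @Cube Lambda S (cob P)
    (fun T U => iota (cob P U) (cob P T) (cmor P T U)).

Definition left_active_cube (S : finType) (P : cube Delta S) : Prop :=
  forall T U : {set S}, T \subset U ->
    left_active (cob P U) (cob P T) (cmor P T U).

Definition right_active_cube (S : finType) (P : cube Delta S) : Prop :=
  forall T U : {set S}, T \subset U ->
    right_active (cob P U) (cob P T) (cmor P T U).

(* A morphism of Λ is a monotone map of Z commuting with the shifts by the
   lengths of the circles; up to the action of Z it comes from Δ exactly when it
   does not wind, i.e. maps the interval [0, m] into a single interval
   [k(n+1), k(n+1) + n].  The functor Δ -> Λ is faithful and every cone of Λ can
   be rotated so that it does not wind, so a square of Δ is a pullback iff its
   image is one.  Cutting the target circle open at the image of a base point
   does the same for cocones, provided p, q and f fix that base point, i.e. are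
   active on a common side.
   Given a strongly biCartesian cube Q of Λ, pick a point y at which the total
   map Q(S) -> Q(∅) jumps.  The pullback property, applied face by face, shows
   that every map of Q jumps at the image of y, so cutting every circle open next
   to that image exhibits Q as the image of a Δ-cube whose maps are all active on
   the chosen side.  Strongly biCartesian cubes are invariant under isomorphism,
   and Δ -> Λ both reflects them and preserves them for such active cubes. *)

From Pilot Require Import Defs.
From mathcomp Require Import all_boot all_order all_algebra.
From mathcomp Require Import zify ring.
Set Implicit Arguments. Unset Strict Implicit. Unset Printing Implicit Defensive.
Import Order.TTheory GRing.Theory Num.Theory.

Local Notation hom := Defs.hom.
Local Notation comp := Defs.comp.

(** * Setoid categories *)

Record setoid_cat (C : Cat) : Prop := SetoidCat {
  heq_sym : forall (a b : ob C) (f g : hom a b), heq f g -> heq g f;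
  heq_trans : forall (a b : ob C) (f g h : hom a b), heq f g -> heq g h -> heq f h;
  valid_idm : forall a : ob C, valid (idm a);
  valid_comp : forall (a b c : ob C) (g : hom b c) (f : hom a b),
    valid g -> valid f -> valid (comp g f);
  comp_heq : forall (a b c : ob C) (g g' : hom b c) (f f' : hom a b),
    valid g -> valid g' -> valid f -> valid f' ->
    heq g g' -> heq f f' -> heq (comp g f) (comp g' f');
  compA : forall (a b c d : ob C) (h : hom c d) (g : hom b c) (f : hom a b),
    heq (comp h (comp g f)) (comp (comp h g) f);
  comp1f : forall (a b : ob C) (f : hom a b), heq (comp (idm b) f) f;
  compf1 : forall (a b : ob C) (f : hom a b), heq (comp f (idm a)) f }.

Arguments valid_idm {C} s a.
Arguments compA {C} s {a b c d} h g f.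
Arguments comp1f {C} s {a b} f.
Arguments compf1 {C} s {a b} f.

Definition op_cat (C : Cat) : Cat :=
  @Cat_ (ob C) (fun a b => hom b a) (fun a b (f : hom b a) => valid f)
    (fun a b (f g : hom b a) => heq f g) (@idm C)
    (fun a b c (g : hom c b) (f : hom b a) => comp f g).

Lemma op_setoid_cat (C : Cat) : setoid_cat C -> setoid_cat (op_cat C).
Proof.
case=> hsym htrans hid hcomp hcongr hA h1f hf1; split=> /=.
- by move=> a b f g; apply: hsym.
- by move=> a b f g h; apply: htrans.
- by move=> a; apply: hid.
- by move=> a b c g f vg vf; apply: hcomp.
- by move=> a b c g g' f f' vg vg' vf vf' egg' eff'; apply: hcongr.
- by move=> a b c d h g f; apply: hsym; apply: hA.
- by move=> a b f; apply: hf1.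
- by move=> a b f; apply: h1f.
Qed.

Lemma pushout_op (C : Cat) (A B D E : ob C) (p : hom A B) (q : hom A D)
    (f : hom B E) (g : hom D E) :
  is_pushout p q f g = is_pullback (C := op_cat C) f g p q.
Proof. by []. Qed.

Lemma is_iso_op (C : Cat) (a b : ob C) (al : hom a b) :
  is_iso al -> is_iso (C := op_cat C) al.
Proof. by case=> va [be [vb [ba ab]]]; split=> //; exists be. Qed.

Lemma is_iso_inv (C : Cat) (a b : ob C) (al : hom a b) (be : hom b a) :
  valid al -> valid be -> heq (comp be al) (idm a) -> heq (comp al be) (idm b) ->
  is_iso be.
Proof. by move=> va vb ba ab; split=> //; exists al. Qed.

Ltac solve_valid HC := repeat (apply: (valid_comp HC) || apply: (valid_idm HC)); assumption.

Section SetoidCategoryTheory.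
Variable C : Cat.
Hypothesis HC : setoid_cat C.

Lemma heq_refl (a b : ob C) (f : hom a b) : heq f f.
Proof. exact: (heq_trans HC (heq_sym HC (compf1 HC f)) (compf1 HC f)). Qed.

Lemma comp_heql (a b c : ob C) (h : hom b c) (f g : hom a b) :
  valid h -> valid f -> valid g -> heq f g -> heq (comp h f) (comp h g).
Proof. by move=> vh vf vg; apply: comp_heq (heq_refl h). Qed.

Lemma comp_heqr (a b c : ob C) (h : hom a b) (f g : hom b c) :
  valid h -> valid f -> valid g -> heq f g -> heq (comp f h) (comp g h).
Proof. by move=> vh vf vg /comp_heq; apply=> //; apply: heq_refl. Qed.

Lemma comp_retract (a b x : ob C) (al : hom a b) (be : hom b a) (u : hom x a) :
  valid al -> valid be -> valid u -> heq (comp be al) (idm a) ->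
  heq (comp be (comp al u)) u.
Proof.
move=> va vb vu ba; apply: (heq_trans HC (compA HC be al u)).
by apply: (heq_trans HC (comp_heqr vu _ _ ba) (comp1f HC u)); solve_valid HC.
Qed.

Lemma iso_cancel (a b x : ob C) (al : hom a b) (u v : hom x a) :
  is_iso al -> valid u -> valid v -> heq (comp al u) (comp al v) -> heq u v.
Proof.
case=> va [be [vb [ba _]]] vu vv e.
apply: (heq_trans HC (heq_sym HC (comp_retract va vb vu ba))).
by apply: (heq_trans HC (comp_heql vb _ _ e) (comp_retract va vb vv ba)); solve_valid HC.
Qed.

Lemma iso_inv_natural (x y x' y' : ob C) (h : hom x y) (h' : hom x' y')
    (alX : hom x x') (beX : hom x' x) (alY : hom y y') (beY : hom y' y) :
  valid h -> valid h' -> valid alX -> valid beX -> valid alY -> valid beY ->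
  heq (comp alX beX) (idm x') -> heq (comp beY alY) (idm y) ->
  heq (comp alY h) (comp h' alX) -> heq (comp beY h') (comp h beX).
Proof.
move=> vh vh' vaX vbX vaY vbY abX baY e.
have e1 : heq h' (comp h' (comp alX beX)).
  by apply: (heq_sym HC (heq_trans HC (comp_heql vh' _ _ abX) (compf1 HC h'))); solve_valid HC.
apply: (heq_trans HC (comp_heql vbY _ _ e1)); try solve_valid HC.
apply: (heq_trans HC (comp_heql vbY _ _ (compA HC h' alX beX))); try solve_valid HC.
apply: (heq_trans HC (comp_heql vbY _ _ (comp_heqr vbX _ _ (heq_sym HC e)))); try solve_valid HC.
apply: (heq_trans HC (comp_heql vbY _ _ (heq_sym HC (compA HC alY h beX)))); try solve_valid HC.
by apply: comp_retract; solve_valid HC.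
Qed.

Lemma comm_precomp (a b c d x : ob C) (y : hom a b) (z : hom b d) (t : hom a c)
    (w : hom c d) (u : hom x a) :
  valid z -> valid y -> valid w -> valid t -> valid u ->
  heq (comp z y) (comp w t) -> heq (comp z (comp y u)) (comp w (comp t u)).
Proof.
move=> vz vy vw vt vu e; apply: (heq_trans HC (compA HC z y u)).
apply: (heq_trans HC (comp_heqr vu _ _ e)); try solve_valid HC.
exact: (heq_sym HC (compA HC w t u)).
Qed.

Lemma natural_paste (a b e a' b' e' : ob C) (p : hom a b) (f : hom b e)
    (p' : hom a' b') (f' : hom b' e')
    (alA : hom a a') (alB : hom b b') (alE : hom e e') :
  valid p -> valid f -> valid p' -> valid f' ->
  valid alA -> valid alB -> valid alE ->
  heq (comp alB p) (comp p' alA) -> heq (comp alE f) (comp f' alB) ->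
  heq (comp alE (comp f p)) (comp (comp f' p') alA).
Proof.
move=> vp vf vp' vf' vaA vaB vaE natp natf.
apply: (heq_trans HC (comm_precomp vaE vf vf' vaB vp natf)).
apply: (heq_trans HC (comp_heql vf' _ _ natp)); try solve_valid HC.
exact: (compA HC f' p' alA).
Qed.

End SetoidCategoryTheory.

Lemma iso_cancel_r (C : Cat) (a b x : ob C) (al : hom a b) (u v : hom b x) :
  setoid_cat C -> is_iso al -> valid u -> valid v ->
  heq (comp u al) (comp v al) -> heq u v.
Proof. by move=> HC /is_iso_op isoal; apply: (iso_cancel (op_setoid_cat HC) isoal). Qed.

Section PullbackTransport.
Variable C : Cat.
Hypothesis HC : setoid_cat C.
Variables (A B D E A' B' D' E' : ob C).
Variables (p : hom A B) (q : hom A D) (f : hom B E) (g : hom D E).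
Variables (p' : hom A' B') (q' : hom A' D') (f' : hom B' E') (g' : hom D' E').
Variables (alA : hom A A') (alB : hom B B') (alD : hom D D') (alE : hom E E').
Hypotheses (vp : valid p) (vq : valid q) (vf : valid f) (vg : valid g).
Hypotheses (vp' : valid p') (vq' : valid q') (vf' : valid f') (vg' : valid g').
Hypotheses (isoA : is_iso alA) (isoB : is_iso alB) (isoD : is_iso alD) (isoE : is_iso alE).
Hypotheses (natp : heq (comp alB p) (comp p' alA)) (natq : heq (comp alD q) (comp q' alA)).
Hypotheses (natf : heq (comp alE f) (comp f' alB)) (natg : heq (comp alE g) (comp g' alD)).

Lemma pullback_transport : is_pullback p' q' f' g' -> is_pullback p q f g.
Proof.
have [vaA [beA [vbA [baA abA]]]] := isoA.
have [vaB [beB [vbB [baB abB]]]] := isoB.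
have [vaD [beD [vbD [baD abD]]]] := isoD.
have [vaE _] := isoE.
case=> sq' univ'; split.
  apply: (iso_cancel HC isoE); try solve_valid HC.
  apply: (heq_trans HC (natural_paste HC vp vf vp' vf' vaA vaB vaE natp natf)).
  apply: (heq_trans HC (comp_heqr HC vaA _ _ sq')); try solve_valid HC.
  exact: (heq_sym HC (natural_paste HC vq vg vq' vg' vaA vaD vaE natq natg)).
move=> X u v vu vv cone.
have cone' : heq (comp f' (comp alB u)) (comp g' (comp alD v)).
  apply: (heq_trans HC (heq_sym HC (comm_precomp HC vaE vf vf' vaB vu natf))).
  apply: (heq_trans HC (comp_heql HC vaE _ _ cone)); try solve_valid HC.
  exact: (comm_precomp HC vaE vg vg' vaD vv natg).
have [w' [vw' [pw' [qw' uniq']]]] :=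
  univ' X _ _ (valid_comp HC vaB vu) (valid_comp HC vaD vv) cone'.
have invp := iso_inv_natural HC vp vp' vaA vbA vaB vbB abA baB natp.
have invq := iso_inv_natural HC vq vq' vaA vbA vaD vbD abA baD natq.
exists (comp beA w'); split; first solve_valid HC.
split.
  apply: (heq_trans HC (heq_sym HC (comm_precomp HC vbB vp' vp vbA vw' invp))).
  apply: (heq_trans HC (comp_heql HC vbB _ _ pw')); try solve_valid HC.
  exact: (comp_retract HC vaB vbB vu baB).
split.
  apply: (heq_trans HC (heq_sym HC (comm_precomp HC vbD vq' vq vbA vw' invq))).
  apply: (heq_trans HC (comp_heql HC vbD _ _ qw')); try solve_valid HC.
  exact: (comp_retract HC vaD vbD vv baD).
move=> w2 vw2 pw2 qw2.
have e : heq (comp alA w2) w'.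
  apply: uniq'; try solve_valid HC.
    apply: (heq_trans HC (heq_sym HC (comm_precomp HC vaB vp vp' vaA vw2 natp))).
    by apply: (comp_heql HC vaB _ _ pw2); solve_valid HC.
  apply: (heq_trans HC (heq_sym HC (comm_precomp HC vaD vq vq' vaA vw2 natq))).
  by apply: (comp_heql HC vaD _ _ qw2); solve_valid HC.
apply: (heq_trans HC (heq_sym HC (comp_retract HC vaA vbA vw2 baA))).
by apply: (comp_heql HC vbA _ _ e); solve_valid HC.
Qed.

End PullbackTransport.

Section IsoSquares.
Variable C : Cat.

Definition valid_square (A B D E : ob C) (p : hom A B) (q : hom A D)
    (f : hom B E) (g : hom D E) : Prop :=
  [/\ valid p, valid q, valid f & valid g].

Definition iso_squares (A B D E A' B' D' E' : ob C)
    (p : hom A B) (q : hom A D) (f : hom B E) (g : hom D E)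
    (p' : hom A' B') (q' : hom A' D') (f' : hom B' E') (g' : hom D' E') : Prop :=
  exists (alA : hom A A') (alB : hom B B') (alD : hom D D') (alE : hom E E'),
    [/\ is_iso alA, is_iso alB, is_iso alD & is_iso alE] /\
    [/\ heq (comp alB p) (comp p' alA), heq (comp alD q) (comp q' alA),
        heq (comp alE f) (comp f' alB) & heq (comp alE g) (comp g' alD)].

Hypothesis HC : setoid_cat C.
Variables (A B D E A' B' D' E' : ob C).
Variables (p : hom A B) (q : hom A D) (f : hom B E) (g : hom D E).
Variables (p' : hom A' B') (q' : hom A' D') (f' : hom B' E') (g' : hom D' E').
Hypotheses (vsq : valid_square p q f g) (vsq' : valid_square p' q' f' g').
Hypothesis isosq : iso_squares p q f g p' q' f' g'.

Lemma pullback_iso : is_pullback p q f g <-> is_pullback p' q' f' g'.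
Proof.
have [vp vq vf vg] := vsq; have [vp' vq' vf' vg'] := vsq'.
have [alA [alB [alD [alE [[isoA isoB isoD isoE] [natp natq natf natg]]]]]] := isosq.
split; last first.
  exact: (pullback_transport HC vp vq vf vg vp' vq' vf' vg'
    isoA isoB isoD isoE natp natq natf natg).
have [vaA [beA [vbA [baA abA]]]] := isoA.
have [vaB [beB [vbB [baB abB]]]] := isoB.
have [vaD [beD [vbD [baD abD]]]] := isoD.
have [vaE [beE [vbE [baE abE]]]] := isoE.
apply: (pullback_transport HC vp' vq' vf' vg' vp vq vf vg
  (is_iso_inv vaA vbA baA abA) (is_iso_inv vaB vbB baB abB)
  (is_iso_inv vaD vbD baD abD) (is_iso_inv vaE vbE baE abE)).
- exact: (iso_inv_natural HC vp vp' vaA vbA vaB vbB abA baB natp).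
- exact: (iso_inv_natural HC vq vq' vaA vbA vaD vbD abA baD natq).
- exact: (iso_inv_natural HC vf vf' vaB vbB vaE vbE abB baE natf).
- exact: (iso_inv_natural HC vg vg' vaD vbD vaE vbE abD baE natg).
Qed.

End IsoSquares.

Lemma pushout_iso (C : Cat) (A B D E A' B' D' E' : ob C)
    (p : hom A B) (q : hom A D) (f : hom B E) (g : hom D E)
    (p' : hom A' B') (q' : hom A' D') (f' : hom B' E') (g' : hom D' E') :
  setoid_cat C -> valid_square p q f g -> valid_square p' q' f' g' ->
  iso_squares p q f g p' q' f' g' ->
  is_pushout p q f g <-> is_pushout p' q' f' g'.
Proof.
move=> HC [vp vq vf vg] [vp' vq' vf' vg'].
case=> alA [alB [alD [alE [[isoA isoB isoD isoE] [natp natq natf natg]]]]].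
rewrite !pushout_op; apply: iff_sym; apply: (pullback_iso (op_setoid_cat HC)) => //.
exists alE, alB, alD, alA; split; first by split; apply: is_iso_op.
by split; apply: (heq_sym HC).
Qed.

Section CubeFaces.
Variable S : finType.
Implicit Types (T : {set S}) (s t : S).

Lemma face_sub1 T s t : s |: T \subset s |: (t |: T).
Proof. exact/setUS/subsetU1. Qed.

Lemma face_sub2 T s t : t |: T \subset s |: (t |: T).
Proof. exact: subsetU1. Qed.

Lemma face_sub0 T s : T \subset s |: T.
Proof. exact: subsetU1. Qed.

Lemma face_valid (C : Cat) (Q : cube C S) T s t : is_cube Q ->
  valid_square (cmor Q (s |: T) (s |: (t |: T))) (cmor Q (t |: T) (s |: (t |: T)))
               (cmor Q T (s |: T)) (cmor Q T (t |: T)).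
Proof.
by case=> vQ _; split; apply: vQ; [apply: face_sub1 | apply: face_sub2 | apply: face_sub0 ..].
Qed.

End CubeFaces.

Lemma strongly_biCartesian_iso (C : Cat) (S : finType) (Q Q' : cube C S) :
  setoid_cat C -> is_cube Q -> is_cube Q' -> cube_iso Q Q' ->
  strongly_biCartesian Q <-> strongly_biCartesian Q'.
Proof.
move=> HC cQ cQ' [al [isoal natal]].
have faces T s s' :
  iso_squares (cmor Q (s |: T) (s |: (s' |: T))) (cmor Q (s' |: T) (s |: (s' |: T)))
              (cmor Q T (s |: T)) (cmor Q T (s' |: T))
              (cmor Q' (s |: T) (s |: (s' |: T))) (cmor Q' (s' |: T) (s |: (s' |: T)))
              (cmor Q' T (s |: T)) (cmor Q' T (s' |: T)).
  exists (al (s |: (s' |: T))), (al (s |: T)), (al (s' |: T)), (al T).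
  split; first by split; apply: isoal.
  split; apply: natal; [exact: face_sub1 | exact: face_sub2 | exact: face_sub0 | exact: face_sub0].
have vQ := face_valid _ _ _ cQ; have vQ' := face_valid _ _ _ cQ'.
by split=> H T s s' ss' sT s'T; have [pb po] := H T s s' ss' sT s'T;
  (split; [apply/(pullback_iso HC (vQ T s s') (vQ' T s s') (faces T s s'))
          | apply/(pushout_iso HC (vQ T s s') (vQ' T s s') (faces T s s'))]).
Qed.

Lemma is_cube_transport (C : Cat) (S : finType) (Q Q' : cube C S) :
  setoid_cat C -> is_cube Q -> (forall T U : {set S}, T \subset U -> valid (cmor Q' T U)) ->
  cube_iso Q Q' -> is_cube Q'.
Proof.
move=> HC [vQ [idQ compQ]] vQ' [al [isoal natal]]; split=> //; split.
  move=> T; have [va _] := isoal T; have vT := vQ T T (subxx T).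
  apply: (iso_cancel_r HC (isoal T)); [exact: vQ' | exact: valid_idm | ].
  apply: (heq_trans HC (heq_sym HC (natal T T (subxx T)))).
  apply: (heq_trans HC (comp_heql HC va vT (valid_idm HC _) (idQ T))).
  exact: (heq_trans HC (compf1 HC _) (heq_sym HC (comp1f HC _))).
move=> T U V TU UV; have TV := subset_trans TU UV.
have [vaT _] := isoal T; have [vaU _] := isoal U; have [vaV _] := isoal V.
apply: (iso_cancel_r HC (isoal V)); first exact: vQ'.
  exact: (valid_comp HC (vQ' _ _ TU) (vQ' _ _ UV)).
apply: (heq_trans HC (heq_sym HC (natal T V TV))).
apply: (heq_trans HC (comp_heql HC vaT (vQ _ _ TV)
  (valid_comp HC (vQ _ _ TU) (vQ _ _ UV)) (compQ T U V TU UV))).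
apply: (heq_trans HC (comm_precomp HC vaT (vQ _ _ TU) (vQ' _ _ TU) vaU (vQ _ _ UV) (natal T U TU))).
apply: (heq_trans HC (comp_heql HC (vQ' _ _ TU) _ _ (natal U V UV))).
- exact: (valid_comp HC vaU (vQ _ _ UV)).
- exact: (valid_comp HC (vQ' _ _ UV) vaV).
exact: (compA HC _ _ _).
Qed.

(** * The functor from Δ to Λ *)

Local Notation iota := Defs.iota.

Local Open Scope ring_scope.

Local Notation lam_map m n F := (@valid Lambda m n F).
Local Notation lam_eq m n F G := (@heq Lambda m n F G).
Local Notation del_map m n f := (@valid Delta m n f).
Local Notation del_eq m n f g := (@heq Delta m n f g).

Lemma int_decomp (m : nat) (i : int) :
  exists q (r : nat), (r <= m)%N /\ i = q * m.+1%:Z + r%:Z.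
Proof.
exists (i %/ m.+1)%Z, (absz (i %% m.+1)%Z).
have r_ge0 : 0 <= (i %% m.+1)%Z by apply: modz_ge0.
have r_lt : (i %% m.+1)%Z < m.+1%:Z by apply: ltz_pmod.
by rewrite gez0_abs // -divz_eq; split=> //; lia.
Qed.

Lemma divz_decomp (m : nat) (q : int) (r : nat) : (r <= m)%N ->
  ((q * m.+1%:Z + r%:Z) %/ m.+1)%Z = q /\ absz ((q * m.+1%:Z + r%:Z) %% m.+1)%Z = r.
Proof. by move=> rm; rewrite divzMDl // modzMDl divz_small ?modz_small ?addr0; lia. Qed.

Lemma eqz_modE (M a b : int) : (a = b %[mod M])%Z <-> exists k, a = b + k * M.
Proof.
split=> [e|[k ->]]; last by rewrite addrC modzMDl.
exists ((a %/ M)%Z - (b %/ M)%Z); rewrite {1}(divz_eq a M) {1}(divz_eq b M) e; ring.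
Qed.

Lemma del_map_widen m n n' f : del_map m n f -> (n <= n')%N -> del_map m n' f.
Proof. by case=> fmono fn nn'; split=> // i im; apply: leq_trans (fn i im) nn'. Qed.

Lemma del_map_comp m n p f g : del_map m n f -> del_map n p g ->
  del_map m p (fun t => g (f t)).
Proof.
move=> [fmono fn] [gmono gp]; split=> [i j ij jm|i im]; last exact/gp/fn.
by apply: gmono; [apply: fmono | apply: fn].
Qed.

Section Iota.
Variables (m n : nat) (f : nat -> nat).

Lemma iota_decomp (q : int) (r : nat) : (r <= m)%N ->
  iota m n f (q * m.+1%:Z + r%:Z) = (f r)%:Z + q * n.+1%:Z.
Proof. by move=> rm; rewrite /iota; have [-> ->] := divz_decomp q rm. Qed.

Lemma iota_nat (r : nat) : (r <= m)%N -> iota m n f r%:Z = (f r)%:Z.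
Proof. by move=> rm; have := iota_decomp 0 rm; rewrite !mul0r !add0r addr0. Qed.

Lemma iota_periodic (i k : int) :
  iota m n f (i + k * m.+1%:Z) = iota m n f i + k * n.+1%:Z.
Proof.
have [q [r [rm ->]]] := int_decomp m i.
rewrite addrAC -mulrDl !iota_decomp //; ring.
Qed.

Lemma lam_map_iota_wrap : del_map m n.+1 f -> lam_map m n (iota m n f).
Proof.
case=> fmono fbound; split=> [i j ij|i]; last first.
  by have := iota_periodic i 1; rewrite !mul1r.
have [q1 [r1 [r1m ei]]] := int_decomp m i; have [q2 [r2 [r2m ej]]] := int_decomp m j.
rewrite ei ej !iota_decomp //; rewrite ei ej in ij.
have f0r2 := fmono 0%N r2 (leq0n _) r2m; have fr1m := fmono r1 m r1m (leqnn _).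
have fm := fbound m (leqnn _).
have q12 : q1 <= q2.
  case: (lerP q1 q2) => // q21.
  have : (q2 + 1) * m.+1%:Z <= q1 * m.+1%:Z by rewrite ler_pM2r //; lia.
  lia.
have [e|q12'] : q1 = q2 \/ q1 + 1 <= q2 by lia.
  subst q2; rewrite lerD2l in ij *; have := fmono r1 r2 ltac:(lia) r2m; lia.
have : (q1 + 1) * n.+1%:Z <= q2 * n.+1%:Z by rewrite ler_pM2r.
lia.
Qed.

Lemma lam_map_iota : del_map m n f -> lam_map m n (iota m n f).
Proof. by move=> fmn; apply/lam_map_iota_wrap/(del_map_widen fmn). Qed.

End Iota.

Lemma lam_map_periodic m n F : lam_map m n F ->
  forall i k, F (i + k * m.+1%:Z) = F i + k * n.+1%:Z.
Proof.
case=> _ Fper.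
have Fnat (k : nat) i : F (i + k%:Z * m.+1%:Z) = F i + k%:Z * n.+1%:Z.
  elim: k i => [|k IH] i; first by rewrite !mul0r !addr0.
  by rewrite -addn1 !PoszD !mulrDl !mul1r addrA Fper IH addrA.
move=> i [k|k]; first exact: Fnat.
have := Fnat k.+1 (i + Negz k * m.+1%:Z).
by rewrite NegzE !mulNr -addrA addNr addr0 => ->; rewrite addrK.
Qed.

Lemma lam_map_eq_on m n F G : lam_map m n F -> lam_map m n G ->
  (forall r : nat, (r <= m)%N -> F r%:Z = G r%:Z) -> F =1 G.
Proof.
move=> lF lG FG i; have [q [r [rm ->]]] := int_decomp m i.
by rewrite addrC (lam_map_periodic lF) (lam_map_periodic lG) FG.
Qed.

Lemma lam_map_window m n F (t i : int) : lam_map m n F ->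
  t <= i <= t + m.+1%:Z -> F t <= F i <= F t + n.+1%:Z.
Proof.
move=> lF /andP[ti it]; have [Fmono Fper] := lF.
by rewrite Fmono //= -Fper Fmono.
Qed.

Lemma lam_map_addl m n F c : lam_map m n F -> lam_map m n (fun i => c + F i).
Proof. by case=> mono per; split=> [i j ij|i]; rewrite ?lerD2l ?mono // per addrA. Qed.

Lemma lam_eq_ext m n F G : F =1 G -> lam_eq m n F G.
Proof. by move=> FG; exists 0 => i; rewrite FG mul0r addr0. Qed.

Lemma lam_eq_eqfun m n F F' G G' : F =1 F' -> G =1 G' -> lam_eq m n F G -> lam_eq m n F' G'.
Proof. by move=> FF' GG' [k FG]; exists k => i; rewrite -FF' -GG'. Qed.

Arguments lam_eq_ext {m n F G}.
Arguments lam_eq_eqfun {m n F F' G G'}.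

Lemma Lambda_setoid : setoid_cat Lambda.
Proof.
split=> /=.
- by move=> a b F G [k FG]; exists (- k) => i; rewrite FG mulNr addrK.
- by move=> a b F G H [k FG] [l GH]; exists (k + l) => i; rewrite GH FG mulrDl addrA.
- by move=> a; split.
- move=> a b c G F [Gmono Gper] [Fmono Fper]; split=> [i j ij|i].
    exact/Gmono/Fmono.
  by rewrite Fper Gper.
- move=> a b c G G' F F' _ lG' _ _ [k GG'] [l FF']; exists (k + l) => i.
  by rewrite FF' (lam_map_periodic lG') GG' mulrDl addrA.
- by move=> a b c d H G F; apply: lam_eq_ext.
- by move=> a b F; apply: lam_eq_ext.
- by move=> a b F; apply: lam_eq_ext.
Qed.

Lemma small_cong_eq (n : nat) (x y k : int) : 0 <= x <= n%:Z -> 0 <= y <= n%:Z ->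
  x = y + k * n.+1%:Z -> x = y.
Proof.
move=> xn yn e.
have [k0|[k1|k1]] : k = 0 \/ 1 <= k \/ k <= -1 by lia.
- by rewrite k0 mul0r addr0 in e.
- have : n.+1%:Z <= k * n.+1%:Z by rewrite ler_peMl.
  lia.
- have : k * n.+1%:Z <= - n.+1%:Z by rewrite -mulN1r ler_pM2r.
  lia.
Qed.

Lemma iota_id n : iota n n (fun t => t) =1 id.
Proof. by move=> i; have [q [r [rn ->]]] := int_decomp n i; rewrite iota_decomp // addrC. Qed.

Lemma iota_comp m n p f g : del_map m n f ->
  iota m p (fun t => g (f t)) =1 (fun i => iota n p g (iota m n f i)).
Proof.
case=> _ fn i; have [q [r [rm ->]]] := int_decomp m i.
by rewrite !iota_decomp // [(f r)%:Z + _]addrC iota_decomp ?fn.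
Qed.
Arguments iota_comp {m n p f g}.

Lemma iota_eq m n f g : del_eq m n f g -> iota m n f =1 iota m n g.
Proof. by move=> fg i; have [q [r [rm ->]]] := int_decomp m i; rewrite !iota_decomp // fg. Qed.

Lemma iota_comp_eq m n p f g h : del_map m n f -> del_eq m p (fun t => g (f t)) h ->
  (fun i => iota n p g (iota m n f i)) =1 iota m p h.
Proof. by move=> fmn gfh i; rewrite -iota_comp //; apply: iota_eq. Qed.

Lemma iota_commute m n1 n2 p f1 f2 g1 g2 : del_map m n1 f1 -> del_map m n2 f2 ->
  del_eq m p (fun t => g1 (f1 t)) (fun t => g2 (f2 t)) ->
  (fun i => iota n1 p g1 (iota m n1 f1 i)) =1 (fun i => iota n2 p g2 (iota m n2 f2 i)).
Proof. by move=> df1 df2 e i; rewrite (iota_comp_eq df1 e) iota_comp. Qed.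

Lemma iota_faithful m n f g : del_map m n f -> del_map m n g ->
  lam_eq m n (iota m n f) (iota m n g) -> del_eq m n f g.
Proof.
move=> [_ fn] [_ gn] [k fg] r rm; apply/eqP; rewrite -eqz_nat; apply/eqP/esym.
have := fg r%:Z; rewrite !iota_nat // => e.
by apply: (small_cong_eq _ _ e); have := fn r rm; have := gn r rm; lia.
Qed.

Section CubeImage.
Variables (S : finType) (P : cube Delta S).

Lemma is_cube_image : is_cube P -> is_cube (cube_image P).
Proof.
case=> vP [idP compP]; split; last split.
- by move=> T U TU; apply: lam_map_iota; apply: vP.
- by move=> T; apply: lam_eq_ext => i /=; rewrite (iota_eq (idP T)) iota_id.
- move=> T U V TU UV; apply: lam_eq_ext => i /=.
  by rewrite -iota_comp; [exact: (iota_eq (compP T U V TU UV) i) | exact: vP].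
Qed.

Lemma is_cube_of_image :
  (forall T U : {set S}, T \subset U -> del_map (cob P U) (cob P T) (cmor P T U)) ->
  is_cube (cube_image P) -> is_cube P.
Proof.
move=> vP [_ [idP compP]]; split=> //; split=> [T|T U V TU UV].
  apply: iota_faithful; [exact: vP | by split | ].
  apply: (heq_trans Lambda_setoid (idP T)); apply: lam_eq_ext => i.
  by rewrite iota_id.
apply: iota_faithful; [exact/vP/(subset_trans TU) | exact: del_map_comp (vP _ _ UV) (vP _ _ TU) |].
apply: (heq_trans Lambda_setoid (compP T U V TU UV)); apply: lam_eq_ext => i.
by rewrite /= (iota_comp (vP _ _ UV)).
Qed.

End CubeImage.

(* [wind m i = i %/ (m+1)] counts turns; it is the image of [m] -> [0]. *)
Definition wind (m : nat) : int -> int := iota m 0 (fun=> 0%N).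

Lemma lam_map_wind m : lam_map m 0 (wind m).
Proof. exact/lam_map_iota. Qed.

Lemma wind_iota m n f : del_map m n f -> forall i, wind n (iota m n f i) = wind m i.
Proof. by move=> fmn i; rewrite /wind -iota_comp. Qed.

Lemma wind_nat m (r : nat) : (r <= m)%N -> wind m r%:Z = 0.
Proof. exact: iota_nat. Qed.

Lemma wind_bounds m i k : wind m i = k -> k * m.+1%:Z <= i <= k * m.+1%:Z + m%:Z.
Proof.
have [q [r [rm ->]]] := int_decomp m i.
rewrite /wind iota_decomp // add0r mulr1 => <-; lia.
Qed.

Definition cut (c : int) (F : int -> int) (r : nat) : nat := absz (F r%:Z - c).

Lemma iota_cut m n N F c : lam_map m n F -> (N <= n.+1)%N ->
  (forall r : nat, (r <= m)%N -> c <= F r%:Z <= c + N%:Z) ->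
  del_map m N (cut c F) /\ forall i, F i = c + iota m n (cut c F) i.
Proof.
move=> lF Nn Fc.
have cutE r : (r <= m)%N -> (cut c F r)%:Z = F r%:Z - c.
  by move=> rm; rewrite gez0_abs //; have := Fc r rm; lia.
have cutF : del_map m N (cut c F).
  split=> [i j ij jm|i im]; last by rewrite -lez_nat cutE //; have := Fc i im; lia.
  rewrite -lez_nat !cutE ?(leq_trans ij) // lerD2r; apply: (proj1 lF); lia.
split=> //; apply: lam_map_eq_on => [||r rm].
- exact: lF.
- exact/lam_map_addl/lam_map_iota_wrap/(del_map_widen cutF Nn).
- by rewrite iota_nat // cutE // addrC subrK.
Qed.

Lemma lam_lift m n F k : lam_map m n F ->
  (forall r : nat, (r <= m)%N -> wind n (F r%:Z) = k) ->
  exists f, del_map m n f /\ lam_eq m n (iota m n f) F.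
Proof.
move=> lF Fk; have [cutF FE] := iota_cut lF (leqnSn n) (fun r rm => wind_bounds (Fk r rm)).
by exists (cut (k * n.+1%:Z) F); split=> //; exists k => i; rewrite FE addrC.
Qed.

Lemma lam_lift_over m n F : lam_map m n F ->
  lam_eq m 0 (wind m) (fun i => wind n (F i)) ->
  exists f, del_map m n f /\ lam_eq m n (iota m n f) F.
Proof.
move=> lF [k Fk]; apply: (lam_lift (k := k)) lF _ => r rm.
by rewrite Fk wind_nat // add0r mulr1.
Qed.

Local Notation HL := Lambda_setoid.

Lemma iota_factor x m n h w k W : del_map m n h -> del_map x m w -> del_map x n k ->
  lam_map x m W -> lam_eq x m (iota x m w) W ->
  lam_eq x n (fun i => iota m n h (W i)) (iota x n k) -> del_eq x n (fun t => h (w t)) k.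
Proof.
move=> dh dw dk lW wW hW; apply: (iota_faithful (del_map_comp dw dh) dk).
apply: (lam_eq_eqfun (fsym (iota_comp dw)) (frefl _)).
exact: (heq_trans HL (comp_heql HL (lam_map_iota dh) (lam_map_iota dw) lW wW) hW).
Qed.

Lemma iota_cofactor m n x h w k W : del_map m n h -> del_map n x w -> del_map m x k ->
  lam_map n x W -> lam_eq n x (iota n x w) W ->
  lam_eq m x (fun i => W (iota m n h i)) (iota m x k) -> del_eq m x (fun t => w (h t)) k.
Proof.
move=> dh dw dk lW wW Wh; apply: (iota_faithful (del_map_comp dh dw) dk).
apply: (lam_eq_eqfun (fsym (iota_comp dh)) (frefl _)).
exact: (heq_trans HL (comp_heqr HL (lam_map_iota dh) (lam_map_iota dw) lW wW) Wh).
Qed.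

Lemma exists_increase (h : int -> int) (n : nat) :
  h 0 < h n%:Z -> exists2 t : nat, (t < n)%N & h t%:Z < h t.+1%:Z.
Proof.
elim: n => [|n IH] hn; first by rewrite ltxx in hn.
have [hnn1|hn1] := ltP (h n%:Z) (h n.+1%:Z); first by exists n.
by have [t tn ht] := IH (lt_le_trans hn hn1); exists t => //; apply: ltnW.
Qed.

Lemma lam_map_flat x h : lam_map x 0 h ->
  exists j, forall r : nat, (r <= x)%N -> h (j + r%:Z) = h j.
Proof.
move=> [hmono hper].
have [t tx ht] : exists2 t : nat, (t < x.+1)%N & h t%:Z < h t.+1%:Z.
  by apply: exists_increase; rewrite -[x.+1%:Z]add0r hper ltzD1.
exists t.+1%:Z => r rx.
have e1 := hmono t.+1%:Z (t.+1%:Z + r%:Z) ltac:(lia).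
have e2 := hmono (t.+1%:Z + r%:Z) (t%:Z + x.+1%:Z) ltac:(lia).
rewrite hper in e2; lia.
Qed.

Definition active (right : bool) (m n : nat) (f : nat -> nat) : Prop :=
  if right then right_active m n f else left_active m n f.

Definition basept (right : bool) : int := if right then -1 else 0.

Lemma iota_active right m n f : del_map m n f -> active right m n f ->
  iota m n f (basept right) = basept right.
Proof.
case: right => [[_ fn] /= fm|_ /= f0]; last by rewrite (iota_nat _ _ (leq0n m)) f0.
have -> : -1 = -1 * m.+1%:Z + m%:Z by lia.
by rewrite iota_decomp // fm; lia.
Qed.

Lemma lam_map_cut right m n F c : lam_map m n F -> F (basept right) = c ->
  del_map m n.+1 (cut c F) /\ forall i, F i = c + iota m n (cut c F) i.
Proof.
move=> lF Fc; apply: (iota_cut lF (leqnn _)) => r rm; rewrite -Fc.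
by apply: (lam_map_window lF); case: right {Fc} => /=; lia.
Qed.

(** * Squares of Δ and their images in Λ *)

Section Squares.
Variables (a b d e : nat) (p q f g : nat -> nat).
Hypotheses (dp : del_map a b p) (dq : del_map a d q) (df : del_map b e f) (dg : del_map d e g).
Local Notation ip := (iota a b p).
Local Notation iq := (iota a d q).
Local Notation if_ := (iota b e f).
Local Notation ig := (iota d e g).

Lemma commute_reflect :
  lam_eq a e (fun i => if_ (ip i)) (fun i => ig (iq i)) ->
  del_eq a e (fun t => f (p t)) (fun t => g (q t)).
Proof.
move=> sq; apply: (iota_faithful (del_map_comp dp df) (del_map_comp dq dg)).
exact: lam_eq_eqfun (fsym (iota_comp dp)) (fsym (iota_comp dq)) sq.
Qed.

Lemma pullback_reflect :
  @is_pullback Lambda a b d e ip iq if_ ig -> @is_pullback Delta a b d e p q f g.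
Proof.
case=> /commute_reflect sq univ; split=> // x u v du dv cone.
have [W [lW [pW [qW uniqW]]]] := univ x _ _ (lam_map_iota du) (lam_map_iota dv)
  (lam_eq_ext (iota_commute du dv cone)).
have [w [dw wW]] : exists w, del_map x a w /\ lam_eq x a (iota x a w) W.
  apply: (lam_lift_over lW).
  apply: (lam_eq_eqfun (wind_iota du) (fun i => wind_iota dp (W i))).
  apply: (heq_sym HL (comp_heql HL (lam_map_wind b) _ (lam_map_iota du) pW)).
  exact: (valid_comp HL (lam_map_iota dp) lW).
exists w; split=> //; split; first exact: (iota_factor dp dw du lW wW pW).
split; first exact: (iota_factor dq dw dv lW wW qW).
move=> w2 dw2 pw2 qw2; apply: (iota_faithful dw2 dw).
apply: (heq_trans HL (uniqW _ (lam_map_iota dw2) _ _) (heq_sym HL wW)).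
- exact/lam_eq_ext/(iota_comp_eq dw2 pw2).
- exact/lam_eq_ext/(iota_comp_eq dw2 qw2).
Qed.

Lemma pushout_reflect :
  @is_pushout Lambda a b d e ip iq if_ ig -> @is_pushout Delta a b d e p q f g.
Proof.
case=> /commute_reflect sq univ; split=> // x u v du dv cocone.
have [W [lW [fW [gW uniqW]]]] := univ x _ _ (lam_map_iota du) (lam_map_iota dv)
  (lam_eq_ext (iota_commute dp dq cocone)).
(* Testing the pushout against <0> shows that [W] does not wind. *)
have [W0 [_ [_ [_ uniq0]]]] := univ 0%N _ _ (lam_map_wind b) (lam_map_wind d)
  (lam_eq_ext (fun i => etrans (wind_iota dp i) (esym (wind_iota dq i)))).
have windW : lam_eq e 0 (wind e) (fun i => wind x (W i)).
  apply: (heq_trans HL (uniq0 _ (lam_map_wind e) _ _)).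
  - exact/lam_eq_ext/(wind_iota df).
  - exact/lam_eq_ext/(wind_iota dg).
  apply: (heq_sym HL (uniq0 _ (valid_comp HL (lam_map_wind x) lW) _ _)).
  - apply: (lam_eq_eqfun (frefl _) (wind_iota du)).
    exact: (comp_heql HL (lam_map_wind x) (valid_comp HL lW (lam_map_iota df))
      (lam_map_iota du) fW).
  - apply: (lam_eq_eqfun (frefl _) (wind_iota dv)).
    exact: (comp_heql HL (lam_map_wind x) (valid_comp HL lW (lam_map_iota dg))
      (lam_map_iota dv) gW).
have [w [dw wW]] := lam_lift_over lW windW.
exists w; split=> //; split; first exact: (iota_cofactor df dw du lW wW fW).
split; first exact: (iota_cofactor dg dw dv lW wW gW).
move=> w2 dw2 fw2 gw2; apply: (iota_faithful dw2 dw).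
apply: (heq_trans HL (uniqW _ (lam_map_iota dw2) _ _) (heq_sym HL wW)).
- exact/lam_eq_ext/(iota_comp_eq df fw2).
- exact/lam_eq_ext/(iota_comp_eq dg gw2).
Qed.

Lemma cone_lift x U V : lam_map x b U -> lam_map x d V ->
  lam_eq x e (fun i => if_ (U i)) (fun i => ig (V i)) ->
  lam_eq x 0 (wind x) (fun i => wind b (U i)) ->
  exists u v, [/\ del_map x b u, del_map x d v, lam_eq x b (iota x b u) U,
    lam_eq x d (iota x d v) V & del_eq x e (fun t => f (u t)) (fun t => g (v t))].
Proof.
move=> lU lV cone windU; have [u [du uU]] := lam_lift_over lU windU.
have [v [dv vV]] : exists v, del_map x d v /\ lam_eq x d (iota x d v) V.
  apply: (lam_lift_over lV); apply: (heq_trans HL windU).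
  apply: (lam_eq_eqfun (fun i => wind_iota df (U i)) (fun i => wind_iota dg (V i))).
  exact: (comp_heql HL (lam_map_wind e) (valid_comp HL (lam_map_iota df) lU)
    (valid_comp HL (lam_map_iota dg) lV) cone).
exists u, v; split=> //; apply: (iota_factor df du (del_map_comp dv dg) lU uU).
apply: (heq_trans HL cone); apply: (lam_eq_eqfun (frefl _) (fsym (iota_comp dv))).
exact: (heq_sym HL (comp_heql HL (lam_map_iota dg) (lam_map_iota dv) lV vV)).
Qed.

Lemma pullback_preserve :
  @is_pullback Delta a b d e p q f g -> @is_pullback Lambda a b d e ip iq if_ ig.
Proof.
case=> sq univ; split; first exact/lam_eq_ext/(iota_commute dp dq sq).
move=> x U V lU lV cone.
(* Rotating the source by [j] keeps [U] within one turn on [0, x]. *)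
have [j flat] := lam_map_flat (valid_comp HL (lam_map_wind b) lU).
have lR : lam_map x x (fun i => j + i) := lam_map_addl j (valid_idm HL x).
have lR' : lam_map x x (fun i => - j + i) := lam_map_addl (- j) (valid_idm HL x).
have windU : lam_eq x 0 (wind x) (fun i => wind b (U (j + i))).
  exists (wind b (U j)) => i; rewrite mulr1 [RHS]addrC.
  apply: (@lam_map_eq_on x 0 (fun i => wind b (U (j + i))) (fun i => wind b (U j) + wind x i)).
  - exact: (valid_comp HL (valid_comp HL (lam_map_wind b) lU) lR).
  - exact: lam_map_addl (lam_map_wind x).
  by move=> r rx; have /= -> := flat r rx; rewrite wind_nat // addr0.
have [u [v [du dv uU vV cone']]] := cone_lift (valid_comp HL lU lR) (valid_comp HL lV lR)
  (comp_heqr HL lR (valid_comp HL (lam_map_iota df) lU) (valid_comp HL (lam_map_iota dg) lV) cone)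
  windU.
have [w [dw [pw [qw uniqw]]]] := univ x u v du dv cone'.
have rotK (F : int -> int) : (fun i => F (j + (- j + i))) =1 F by move=> i; rewrite addNKr.
exists (fun i => iota x a w (- j + i)); split.
  exact: (valid_comp HL (lam_map_iota dw) lR').
split.
  apply: (lam_eq_eqfun (fun i => esym (iota_comp_eq dw pw (- j + i))) (rotK U)).
  exact: (comp_heqr HL lR' (lam_map_iota du) (valid_comp HL lU lR) uU).
split.
  apply: (lam_eq_eqfun (fun i => esym (iota_comp_eq dw qw (- j + i))) (rotK V)).
  exact: (comp_heqr HL lR' (lam_map_iota dv) (valid_comp HL lV lR) vV).
move=> W2 lW2 pW2 qW2; have lW2R := valid_comp HL lW2 lR.
have lpW2 := valid_comp HL (lam_map_iota dp) lW2; have lqW2 := valid_comp HL (lam_map_iota dq) lW2.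
have [w2 [dw2 w2W]] : exists w2, del_map x a w2 /\ lam_eq x a (iota x a w2) (fun i => W2 (j + i)).
  apply: (lam_lift_over lW2R); apply: (heq_trans HL windU).
  apply: (lam_eq_eqfun (frefl _) (fun i => wind_iota dp (W2 (j + i)))).
  apply: (heq_sym HL (comp_heql HL (lam_map_wind b) _ _ (comp_heqr HL lR lpW2 lU pW2))).
  - exact: (valid_comp HL lpW2 lR).
  - exact: (valid_comp HL lU lR).
have w2w : del_eq x a w2 w.
  apply: uniqw => //.
  - apply: (iota_factor dp dw2 du lW2R w2W).
    exact: (heq_trans HL (comp_heqr HL lR lpW2 lU pW2) (heq_sym HL uU)).
  - apply: (iota_factor dq dw2 dv lW2R w2W).
    exact: (heq_trans HL (comp_heqr HL lR lqW2 lV qW2) (heq_sym HL vV)).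
apply: (lam_eq_eqfun (rotK W2) (fun i => iota_eq w2w (- j + i))).
exact: (comp_heqr HL lR' lW2R (lam_map_iota dw2) (heq_sym HL w2W)).
Qed.

Lemma pushout_preserve right :
  active right a b p -> active right a d q -> active right b e f ->
  @is_pushout Delta a b d e p q f g -> @is_pushout Lambda a b d e ip iq if_ ig.
Proof.
move=> ap aq af [sq univ]; have sqL := iota_commute dp dq sq.
split; first exact: lam_eq_ext sqL.
have tp := iota_active dp ap; have tq := iota_active dq aq; have tf := iota_active df af.
(* Cut <x> open at [c], the image of the base point fixed by p, q and f: the
   cocone becomes a cocone of Δ with vertex [x+1]. *)
move=> x U V lU lV [k cocone]; move Uc: (U (basept right)) => c.
have {}cocone i : V (iq i) = U (ip i) + k * x.+1%:Z := cocone i.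
pose V1 i := - (k * x.+1%:Z) + V i.
have lV1 : lam_map d x V1 := lam_map_addl _ lV.
have V1U i : V1 (iq i) = U (ip i) by rewrite /V1 cocone addrC addrK.
have [du UE] := lam_map_cut lU Uc.
have [dv V1E] : del_map d x.+1 (cut c V1) /\ forall i, V1 i = c + iota d x (cut c V1) i.
  by apply: (lam_map_cut (right := right) lV1); rewrite -tq V1U tp Uc.
have cocone' : del_eq a x.+1 (fun r => cut c U (p r)) (fun r => cut c V1 (q r)).
  move=> r ra; have := V1U r%:Z; rewrite !iota_nat // UE V1E !iota_nat ?(proj2 dp) ?(proj2 dq) //.
  by move/addrI; case.
have [w [dw [fw [gw uniqw]]]] := univ x.+1 _ _ du dv cocone'.
pose W i := c + iota e x w i.
have lW : lam_map e x W := lam_map_addl c (lam_map_iota_wrap dw).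
have WU i : W (if_ i) = U i by rewrite /W (iota_comp_eq (p := x) df fw) -UE.
have WV i : W (ig i) = V1 i by rewrite /W (iota_comp_eq (p := x) dg gw) -V1E.
exists W; split=> //; split; first exact: lam_eq_ext WU.
split; first by exists k => i /=; rewrite WV /V1 [RHS]addrC addNKr.
move=> W2 lW2 [k5 fW2] [k6 gW2]; pose W3 i := k5 * x.+1%:Z + W2 i.
have W3U i : W3 (if_ i) = U i by rewrite /W3 fW2 addrC.
have k56 : k6 = k5 + k.
  have := cocone 0; rewrite fW2 gW2 /= sqL -addrA -mulrDl => /addrI.
  exact: mulIf.
have W3V i : W3 (ig i) = V1 i by rewrite /W3 /V1 gW2 k56 mulrDl; ring.
have [dw3 W3E] := lam_map_cut (lam_map_addl (k5 * x.+1%:Z) lW2)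
  (etrans (congr1 W3 (esym tf)) (etrans (W3U _) Uc)).
have w3w : del_eq e x.+1 (cut c W3) w.
  apply: uniqw => // r rb.
    have := W3U r%:Z; rewrite iota_nat // /W3 W3E UE !iota_nat ?(proj2 df) //.
    by move/addrI; case.
  have := W3V r%:Z; rewrite iota_nat // /W3 W3E V1E !iota_nat ?(proj2 dg) //.
  by move/addrI; case.
by exists k5 => i; rewrite /W -(iota_eq (n := x) w3w) -W3E addrC.
Qed.

End Squares.

Section ImageCube.
Variables (S : finType) (P : cube Delta S).
Hypothesis cP : is_cube P.

Lemma strongly_biCartesian_reflect :
  strongly_biCartesian (cube_image P) -> strongly_biCartesian P.
Proof.
move=> H T s s' ss' sT s'T; have [pb po] := H T s s' ss' sT s'T.
have [dp dq df dg] := face_valid T s s' cP.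
by split; [exact: pullback_reflect pb | exact: pushout_reflect po].
Qed.

Definition active_cube (right : bool) : Prop :=
  forall T U : {set S}, T \subset U -> active right (cob P U) (cob P T) (cmor P T U).

Lemma strongly_biCartesian_preserve right : active_cube right ->
  strongly_biCartesian P -> strongly_biCartesian (cube_image P).
Proof.
move=> aP H T s s' ss' sT s'T; have [pb po] := H T s s' ss' sT s'T.
have [dp dq df dg] := face_valid T s s' cP.
split; first exact: pullback_preserve pb.
by apply: (pushout_preserve dp dq df dg _ _ _ po); apply: aP;
  [exact: face_sub1 | exact: face_sub2 | exact: face_sub0].
Qed.

End ImageCube.

(** * Lifting a strongly biCartesian cube of Λ to Δ *)

Lemma lam_map_mod m n F a b : lam_map m n F ->
  (a = b %[mod m.+1])%Z -> (F a = F b %[mod n.+1])%Z.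
Proof. by move=> lF /eqz_modE[k ->]; apply/eqz_modE; exists k; rewrite (lam_map_periodic lF). Qed.

Lemma lam_map_pt m c : lam_map 0 m (fun i => c + i * m.+1%:Z).
Proof.
split=> [i j ij|i]; first by rewrite lerD2l ler_pM2r.
by rewrite mulrDl mul1r addrA.
Qed.

Lemma pullback_points a b d e (p q f g : int -> int) : lam_map b e f -> lam_map d e g ->
  @is_pullback Lambda a b d e p q f g -> forall bb dd, (f bb = g dd %[mod e.+1])%Z ->
  exists aa, (p aa = bb %[mod b.+1])%Z /\ (q aa = dd %[mod d.+1])%Z.
Proof.
move=> lf lg [_ univ] bb dd /eqz_modE[k fg].
have cone : lam_eq 0 e (fun i => f (bb + i * b.+1%:Z)) (fun i => g (dd + i * d.+1%:Z)).
  by exists (- k) => i; rewrite (lam_map_periodic lf) (lam_map_periodic lg) fg; ring.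
have [w [_ [[k1 pw] [[k2 qw] _]]]] := univ 0%N _ _ (lam_map_pt b bb) (lam_map_pt d dd) cone.
exists (w 0); split; apply/eqz_modE.
  by exists (- k1); have := pw 0; rewrite /= mul0r addr0 => ->; ring.
by exists (- k2); have := qw 0; rewrite /= mul0r addr0 => ->; ring.
Qed.

Definition step (right : bool) : int := if right then 1 else -1.

Definition jumps (right : bool) (G : int -> int) (y : int) : Prop :=
  G (y + step right) <> G y.

Lemma jumps_mod right m n G y y' : lam_map m n G -> (y' = y %[mod m.+1])%Z ->
  jumps right G y -> jumps right G y'.
Proof.
by move=> lG /eqz_modE[k ->] jy; rewrite /jumps addrAC !(lam_map_periodic lG) => /addIr.
Qed.

Lemma jumps_shift right G G' c y : (forall i, G' i = G i + c) ->
  jumps right G y -> jumps right G' y.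
Proof. by move=> GG' jy; rewrite /jumps !GG' => /addIr. Qed.

Lemma jumps_comp right G H y : jumps right (fun i => G (H i)) y -> jumps right H y.
Proof. by move=> jy e; apply: jy; rewrite e. Qed.

Lemma exists_jump right m n G : lam_map m n G -> exists y, jumps right G y.
Proof.
move=> [_ Gper]; have [t _ Gt] : exists2 t : nat, (t < m.+1)%N & G t%:Z < G t.+1%:Z.
  by apply: exists_increase; rewrite -[m.+1%:Z]add0r Gper ltrDl.
case: right; [exists t%:Z | exists t.+1%:Z]; rewrite /jumps /step.
  have -> : t%:Z + 1 = t.+1%:Z by lia.
  lia.
have -> : t.+1%:Z + -1 = t%:Z by lia.
lia.
Qed.

Lemma flat_comp right A B E (p f : int -> int) x aa : lam_map A B p -> lam_map B E f ->
  f (p x + step right) = f (p x) -> (p aa = p x + step right %[mod B.+1])%Z ->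
  f (p (x + step right)) = f (p x).
Proof.
move=> [pmono pper] [fmono _] flat /eqz_modE[k pa].
have {}pa : p (aa + (- k) * A.+1%:Z) = p x + step right.
  by rewrite (lam_map_periodic (conj pmono pper)) pa; ring.
move: pa flat; set a := aa + _; case: right => /= pa flat.
- have xa : x < a by case: (ltP x a) => // /pmono; rewrite pa; lia.
  have := fmono _ _ (pmono (x + 1) a ltac:(lia)); have := fmono _ _ (pmono x (x + 1) ltac:(lia)).
  by rewrite pa flat => h1 h2; apply/eqP; rewrite eq_le h1 h2.
- have ax : a < x by case: (ltP a x) => // /pmono; rewrite pa; lia.
  have := fmono _ _ (pmono a (x - 1) ltac:(lia)); have := fmono _ _ (pmono (x - 1) x ltac:(lia)).
  by rewrite pa flat => h1 h2; apply/eqP; rewrite eq_le h1 h2.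
Qed.

Lemma jump_window right m n G x (r : nat) : lam_map m n G -> jumps right G x -> (r <= m)%N ->
  G x - (if right then n%:Z else 0) <= G (x - (if right then m%:Z else 0) + r%:Z)
    <= G x - (if right then n%:Z else 0) + n%:Z.
Proof.
move=> [Gmono Gper]; rewrite /jumps /step; case: right => /= jump rm.
- have m0 := Gmono x (x + 1) ltac:(lia).
  have m1 := Gmono (x - m%:Z + r%:Z) x ltac:(lia).
  have m2 := Gmono (x + 1 - m.+1%:Z) (x - m%:Z + r%:Z) ltac:(lia).
  have e2 := Gper (x + 1 - m.+1%:Z); rewrite subrK in e2.
  move: (G x) (G (x + 1)) (G (x - m%:Z + r%:Z)) (G (x + 1 - m.+1%:Z)) jump m0 m1 m2 e2.
  by move=> a b c d; lia.
- have m0 := Gmono (x - 1) x ltac:(lia).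
  have m1 := Gmono x (x - 0 + r%:Z) ltac:(lia).
  have m2 := Gmono (x - 0 + r%:Z) (x - 1 + m.+1%:Z) ltac:(lia).
  rewrite Gper in m2.
  move: (G x) (G (x - 1)) (G (x - 0 + r%:Z)) jump m0 m1 m2.
  by move=> a b c; lia.
Qed.

Section Construction.
Variables (S : finType) (Q : cube Lambda S).
Hypothesis cQ : is_cube Q.
Hypothesis pbQ : forall (T : {set S}) (s s' : S), s != s' -> s \notin T -> s' \notin T ->
  is_pullback (cmor Q (s |: T) (s |: (s' |: T))) (cmor Q (s' |: T) (s |: (s' |: T)))
              (cmor Q T (s |: T)) (cmor Q T (s' |: T)).
Local Notation F := (cmor Q).
Local Notation n := (cob Q).
Implicit Types T U V W : {set S}.

Lemma lam_map_Q T U : T \subset U -> lam_map (n U) (n T) (F T U).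
Proof. by case: cQ => vQ _; apply: vQ. Qed.

Lemma Q_comp T U V : T \subset U -> U \subset V ->
  exists k, forall i, F T U (F U V i) = F T V i + k * (n T).+1%:Z.
Proof. by case: cQ => _ [_ compQ]; apply: compQ. Qed.

Lemma Q_comp_mod T U V i : T \subset U -> U \subset V ->
  (F T U (F U V i) = F T V i %[mod (n T).+1])%Z.
Proof. by move=> TU UV; apply/eqz_modE; have [k e] := Q_comp TU UV; exists k. Qed.

Lemma Q_id_mod T i : (F T T i = i %[mod (n T).+1])%Z.
Proof.
apply/eqz_modE; case: cQ => _ [idQ _]; have [k e] := idQ T.
exists (- k); have /= ei := e i.
by apply: (addIr (k * (n T).+1%:Z)); rewrite -ei mulNr addrNK.
Qed.

Lemma big_square_points T U s' : T \subset U -> s' \notin U ->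
  forall bb dd, (F T U bb = F T (s' |: T) dd %[mod (n T).+1])%Z ->
  exists aa, (F U (s' |: U) aa = bb %[mod (n U).+1])%Z /\
             (F (s' |: T) (s' |: U) aa = dd %[mod (n (s' |: T)).+1])%Z.
Proof.
move=> TU; move: {2}(#|U| - #|T|)%N (erefl (#|U| - #|T|)%N) => k.
elim: k U TU => [|k IH] U TU cardU s'U bb dd bd.
  have eTU : T = U by apply/eqP; rewrite eqEcard TU /= -subn_eq0 cardU.
  subst U; exists dd; split; last exact: Q_id_mod.
  by rewrite -bd Q_id_mod.
have [s sU sT] : exists2 s, s \in U & s \notin T.
  have : T \proper U by rewrite properEcard TU /=; lia.
  by case/properP => _ [s sU sT]; exists s.
have ss' : s != s' by apply: contraNneq s'U => <-.
have cardW : (#|U :\ s| - #|T|)%N = k by have := cardsD1 s U; rewrite sU; lia.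
have TW : T \subset U :\ s by rewrite subsetD1 TU sT.
have s'W : s' \notin U :\ s by apply: contra s'U; apply/subsetP/subD1set.
have [a' [Wa' Ta']] := IH _ TW cardW s'W (F (U :\ s) U bb) dd
  (etrans (Q_comp_mod _ TW (subD1set U s)) bd).
move: (U :\ s) (setD1K sU) (setD11 s U) TW s'W Wa' Ta' => W <- /negbT sW TW s'W Wa' Ta'.
have [aa [Ua Ta]] := pullback_points (lam_map_Q (face_sub0 W s)) (lam_map_Q (face_sub0 W s'))
  (pbQ ss' sW s'W) (esym Wa').
exists aa; rewrite setUCA; split=> //.
have s'TW : s' |: T \subset s' |: W by apply: setUS.
rewrite -(Q_comp_mod _ s'TW (face_sub2 W s s')); rewrite -Ta'.
exact: lam_map_mod (lam_map_Q s'TW) Ta.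
Qed.

Section CutAtJump.
Variables (right : bool) (y : int).
Hypothesis jy : jumps right (F set0 setT) y.

Definition jump_pt U := F U setT y.

(* Downward induction on U: were F T U flat at the image of the jump point, the
   pullback square on U, s' |: U, T and s' |: T would make F T (s' |: U) flat too. *)
Lemma jumps_cube T U : T \subset U -> jumps right (F T U) (jump_pt U).
Proof.
move: {2}(#|S| - #|U|)%N (erefl (#|S| - #|U|)%N) => k.
elim: k U T => [|k IH] U T cardU TU.
  have eU : U = setT by apply/eqP; rewrite eqEcard subsetT cardsT /= -subn_eq0 cardU.
  subst U; apply: (jumps_mod (lam_map_Q TU) (Q_id_mod _ y)).
  have [c Fc] := Q_comp (sub0set T) TU.
  exact: (jumps_comp (jumps_shift Fc jy)).
have [s' s'U] : exists s', s' \notin U.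
  have : U \proper setT by rewrite properEcard subsetT cardsT /= -subn_gt0 cardU.
  by case/properP => _ [s' _ s'U]; exists s'.
have UU' := face_sub0 U s'; have TU' := subset_trans TU UU'.
have cardU' : (#|S| - #|s' |: U|)%N = k by rewrite cardsU1 s'U add1n subnS cardU.
have [c Fc] := Q_comp TU UU'.
have jc := jumps_shift Fc (IH _ _ cardU' TU').
apply: (jumps_mod (lam_map_Q TU) (esym (Q_comp_mod _ UU' (subsetT _)))) => flat.
have s'TU' : s' |: T \subset s' |: U by apply: setUS.
set x := jump_pt (s' |: U).
have bd : (F T U (F U (s' |: U) x + step right) = F T (s' |: T) (F (s' |: T) (s' |: U) x)
            %[mod (n T).+1])%Z.
  by rewrite flat !Q_comp_mod // face_sub0.
have [aa [Ua _]] := big_square_points TU s'U bd.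
exact: jc (flat_comp (lam_map_Q UU') (lam_map_Q TU) flat Ua).
Qed.

(* Vertex U is cut open to the interval [start U, start U + n U], which ends
   (right) or begins (left) at the image of the jump point. *)
Definition start U : int := jump_pt U - (if right then (n U)%:Z else 0).
Definition lap T U : int := ((F T U (jump_pt U) - jump_pt T) %/ (n T).+1)%Z.
Definition base T U : int := start T + lap T U * (n T).+1%:Z.
Definition lift_mor T U : nat -> nat := cut (base T U) (fun i => F T U (start U + i)).
Definition lift_cube : cube Delta S := @Cube Delta S n lift_mor.

Lemma baseE T U : T \subset U -> base T U = F T U (jump_pt U) - (if right then (n T)%:Z else 0).
Proof.
move=> TU; have [k e] := Q_comp TU (subsetT U).
have cancel (a b : int) : a + b - a = b by rewrite addrC addKr.
by rewrite /base /start /lap /jump_pt e cancel mulzK //; ring.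
Qed.

Lemma window T U (r : nat) : T \subset U -> (r <= n U)%N ->
  base T U <= F T U (start U + r%:Z) <= base T U + (n T)%:Z.
Proof. by move=> TU rU; rewrite baseE //; apply: jump_window (lam_map_Q TU) (jumps_cube TU) rU. Qed.

Lemma lift_mor_spec T U : T \subset U -> del_map (n U) (n T) (lift_mor T U) /\
  forall i, F T U (start U + i) = base T U + iota (n U) (n T) (lift_mor T U) i.
Proof.
move=> TU; apply: (iota_cut _ (leqnSn _) (fun r rU => window TU rU)).
exact: (valid_comp HL (lam_map_Q TU) (lam_map_addl (start U) (valid_idm HL _))).
Qed.

Lemma lift_cube_iso : cube_iso Q (cube_image lift_cube).
Proof.
exists (fun T i => - start T + i); split.
  move=> T; split; first exact: lam_map_addl (valid_idm HL _).
  exists (fun i => start T + i); split; first exact: lam_map_addl (valid_idm HL _).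
  by split; apply: lam_eq_ext => i /=; rewrite ?addKr ?addNKr.
move=> T U TU; have [_ PE] := lift_mor_spec TU.
exists (- lap T U) => i /=.
by have := PE (- start U + i); rewrite addNKr => ->; rewrite /base; ring.
Qed.

Lemma is_cube_lift_cube : is_cube lift_cube.
Proof.
apply: is_cube_of_image => [T U TU|]; first by have [] := lift_mor_spec TU.
apply: (is_cube_transport HL cQ _ lift_cube_iso) => T U TU.
by apply: lam_map_iota; have [] := lift_mor_spec TU.
Qed.

Lemma lift_cube_active : active_cube lift_cube right.
Proof.
move=> T U TU; have [dP PE] := lift_mor_spec TU; have bE := baseE TU.
rewrite /active /right_active /left_active /=; move: PE bE; rewrite /start.
case: (right) => PE bE; apply/eqP; rewrite -eqz_nat; apply/eqP.
  have := PE (n U)%:Z; rewrite subrK iota_nat // bE => e.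
  by apply: (addrI (F T U (jump_pt U) - (n T)%:Z)); rewrite -e subrK.
have := PE 0; rewrite !subr0 (iota_nat _ _ (leq0n _)) bE => e.
by rewrite subr0 in e; apply: (addrI (F T U (jump_pt U))); rewrite -e addr0.
Qed.

End CutAtJump.

End Construction.

Lemma exists_active_lift (S : finType) (Q : cube Lambda S) right : is_cube Q ->
  (forall (T : {set S}) (s s' : S), s != s' -> s \notin T -> s' \notin T ->
    is_pullback (cmor Q (s |: T) (s |: (s' |: T))) (cmor Q (s' |: T) (s |: (s' |: T)))
                (cmor Q T (s |: T)) (cmor Q T (s' |: T))) ->
  exists P : cube Delta S, [/\ is_cube P, active_cube P right & cube_iso Q (cube_image P)].
Proof.
move=> cQ pbQ; have [y jy] := exists_jump right (lam_map_Q cQ (sub0set [set: S])).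
exists (lift_cube Q right y); split; first exact: (is_cube_lift_cube cQ pbQ jy).
  exact: (lift_cube_active cQ pbQ jy).
exact: (lift_cube_iso cQ pbQ jy).
Qed.

Lemma strongly_biCartesian_lift (S : finType) (Q : cube Lambda S) right : is_cube Q ->
  strongly_biCartesian Q <->
  exists P : cube Delta S, is_cube P /\ strongly_biCartesian P /\
    active_cube P right /\ cube_iso Q (cube_image P).
Proof.
move=> cQ; split=> [sQ | [P [cP [sP [aP isoP]]]]].
  have [P [cP aP isoP]] :=
    exists_active_lift right cQ (fun T s s' ss' sT s'T => (sQ T s s' ss' sT s'T).1).
  exists P; split=> //; split; last by split.
  apply: (strongly_biCartesian_reflect cP).
  exact/(strongly_biCartesian_iso HL cQ (is_cube_image cP) isoP).
apply/(strongly_biCartesian_iso HL cQ (is_cube_image cP) isoP).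
exact: (strongly_biCartesian_preserve cP aP sP).
Qed.

Unset Implicit Arguments.

Theorem corollary4p2p5 (S : finType) (Q : cube Lambda S) :
  is_cube Q ->
  (strongly_biCartesian Q <->
     exists P : cube Delta S, is_cube P /\ strongly_biCartesian P /\
       left_active_cube P /\ cube_iso Q (cube_image P)) /\
  (strongly_biCartesian Q <->
     exists P : cube Delta S, is_cube P /\ strongly_biCartesian P /\
       right_active_cube P /\ cube_iso Q (cube_image P)).
Proof.
move=> cQ; split; first exact: (strongly_biCartesian_lift false cQ).
exact: (strongly_biCartesian_lift true cQ).
Qed.
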